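(* Let $(X,d_X)$, $\delta,\epsilon,R$ and $F\colon\mathbb{H}^n\to X$ satisfy hypotheses (1)–(4) of the following criterion: (1) each $F\circ\eta_x$ is a geodesic; (2) for distinct $x,x'$, $F\circ\eta_x$ and $F\circ\eta_{x'}$ are two sides of an ideal $\delta$-slim triangle in $X$; (3) $e^{-t}|x-x'|<\epsilon$ implies $d_X(F(x,t),F(x',t))\le R$; (4) $e^{-t_k}|x_k-x_k'|\to\infty$ implies $d_X(F(x_k,t_k),F(x_k',t_k))\to\infty$. Put $\Delta=\max\{3\delta,\,2R/\epsilon+R\}$. Then for every vertical triangle $T=\mathcal{P}\cup\mathcal{Q}\cup\mathcal{R}\subset\mathbb{H}^n$, with $x=x(\mathcal{P})$, $x'=x(\mathcal{Q})$, $$d_X\big(F(x,h_T),F(x',h_T)\big)\le 3\Delta.$$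
   Context: Exponential model $\mathbb{H}^n=\mathbb{R}^{n-1}\times\mathbb{R}$, coordinates $(x,t)$, metric $e^{-2t}|dx|^2+dt^2$; vertical geodesics $\eta_x(t)=(x,t)$. An ideal $\delta$-slim triangle: three bi-infinite geodesics forming an ideal triangle, each side in the closed $\delta$-neighborhood of the union of the other two. A vertical triangle $T=\mathcal{P}\cup\mathcal{Q}\cup\mathcal{R}$ is an ideal triangle in $\mathbb{H}^n$ whose sides $\mathcal{P}=\eta_x(\mathbb{R})$, $\mathcal{Q}=\eta_{x'}(\mathbb{R})$ ($x\neq x'$) are vertical and whose third side $\mathcal{R}$ joins their other endpoints; $x(\mathcal{P})=x$, $x(\mathcal{Q})=x'$. The midpoint $r$ of $\mathcal{R}$ is the point of $\mathcal{R}$ with maximal $t$-coordinate $t(r)$ (so $e^{-t(r)}|x-x'|=2$). The displaced height of $T$ is $h_T=\min\{t\in\mathbb{R} : d_X(F(x,t),F(\mathcal{Q}))\le\Delta \text{ or } d_X(F(\mathcal{P}),F(x',t))\le\Delta\}$, a finite number satisfying $h_T\le t(r)$. *)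

From Stdlib Require Import Reals Lra Lia.
Open Scope R_scope.

Definition is_metric {X : Type} (d : X -> X -> R) : Prop :=
  (forall x y, 0 <= d x y) /\
  (forall x y, d x y = 0 <-> x = y) /\
  (forall x y, d x y = d y x) /\
  (forall x y z, d x z <= d x y + d y z).

(** Points of R^m: functions nat -> R vanishing from index m on. *)
Definition Vec (m : nat) : Type := {v : nat -> R | forall i, (m <= i)%nat -> v i = 0}.

Fixpoint sumsq (m : nat) (f : nat -> R) : R :=
  match m with
  | O => 0
  | S k => sumsq k f + (f k) ^ 2
  end.

Definition euclid {m : nat} (x y : Vec m) : R :=
  sqrt (sumsq m (fun i => proj1_sig x i - proj1_sig y i)).

Definition geodesic {X : Type} (d : X -> X -> R) (g : R -> X) : Prop :=
  forall s t, d (g s) (g t) = Rabs (s - t).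

(** The end of g at +infinity (b = true) or -infinity (b = false), as a ray. *)
Definition gray {X : Type} (g : R -> X) (b : bool) : R -> X :=
  fun t => g (if b then t else - t).

(** Two geodesic rays converge to the same point at infinity. *)
Definition asymptotic {X : Type} (d : X -> X -> R) (r1 r2 : R -> X) : Prop :=
  exists C, forall t, 0 <= t -> d (r1 t) (r2 t) <= C.

(** g1, g2, g3 form an ideal triangle: consecutive sides share an ideal
    endpoint, each side using its two distinct ends. *)
Definition ideal_triangle {X : Type} (d : X -> X -> R) (g1 g2 g3 : R -> X) : Prop :=
  exists e1 e2 e3 : bool,
    asymptotic d (gray g1 e1) (gray g2 (negb e2)) /\
    asymptotic d (gray g2 e2) (gray g3 (negb e3)) /\
    asymptotic d (gray g3 e3) (gray g1 (negb e1)).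

(** d(p, image g) <= r, with d(p, S) the infimum distance. *)
Definition dist_img_le {X : Type} (d : X -> X -> R) (p : X) (g : R -> X) (r : R) : Prop :=
  forall eta, 0 < eta -> exists s, d p (g s) < r + eta.

(** The side g1 lies in the closed delta-neighborhood of image g2 ∪ image g3. *)
Definition side_in_nbhd {X : Type} (d : X -> X -> R) (delta : R) (g1 g2 g3 : R -> X) : Prop :=
  forall t eta, 0 < eta ->
    exists s, d (g1 t) (g2 s) < delta + eta \/ d (g1 t) (g3 s) < delta + eta.

Definition slim_triangle {X : Type} (d : X -> X -> R) (delta : R) (g1 g2 g3 : R -> X) : Prop :=
  side_in_nbhd d delta g1 g2 g3 /\ side_in_nbhd d delta g2 g3 g1 /\
  side_in_nbhd d delta g3 g1 g2.

Definition ideal_slim_triangle {X : Type} (d : X -> X -> R) (delta : R) (g1 g2 g3 : R -> X) : Prop :=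
  geodesic d g1 /\ geodesic d g2 /\ geodesic d g3 /\
  ideal_triangle d g1 g2 g3 /\ slim_triangle d delta g1 g2 g3.

Definition DeltaC (delta eps Rc : R) : R := Rmax (3 * delta) (2 * Rc / eps + Rc).

(** The set whose minimum is the displaced height h_T
    (F : R^(n-1) x R -> X, written curried, F x t = F(x,t)). *)
Definition height_set {X : Type} {m : nat} (d : X -> X -> R) (F : Vec m -> R -> X)
  (Delta : R) (x x' : Vec m) (t : R) : Prop :=
  dist_img_le d (F x t) (F x') Delta \/ dist_img_le d (F x' t) (F x) Delta.

Definition is_min (P : R -> Prop) (h : R) : Prop :=
  P h /\ forall t, P t -> h <= t.

(** Let g = F∘η_x and g' = F∘η_x' (geodesics by (1)).  Since
    |x - x'| is a fixed finite number, e^{-t}|x - x'| < ε for all large t, so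
    by (3) the two geodesics are eventually R-close going upwards.  At height h
    the minimality of h_T gives a point g'(s) with d(g(h), g'(s)) <= Δ (or the
    symmetric statement).  Comparing lengths along both geodesics up to a
    common height t >= h, s where they are R-close shows |s - h| <= Δ + R,
    hence d(g(h), g'(h)) <= 2Δ + R.  Finally (3) forces R >= 0 and so R <= Δ,
    giving the bound 3Δ. *)
From Stdlib Require Import Reals Lra.
Open Scope R_scope.

Definition eventually_close {X : Type} (d : X -> X -> R) (g1 g2 : R -> X) (c : R) : Prop :=
  forall a, exists t, a <= t /\ d (g1 t) (g2 t) <= c.

Section TwoGeodesics.

Variables (X : Type) (d : X -> X -> R) (g1 g2 : R -> X).
Hypothesis Hd : is_metric d.
Hypothesis G1 : geodesic d g1.
Hypothesis G2 : geodesic d g2.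

(** If g1(h) is D-close to g2(s) and both geodesics are c-close at a common
    height t above h and s, then the parameters h and s differ by at most
    D + c: each of t - h and t - s is bounded by the other plus D + c. *)
Lemma geodesic_gap (c D h s t : R) :
  d (g1 t) (g2 t) <= c -> d (g1 h) (g2 s) <= D -> h <= t -> s <= t ->
  Rabs (s - h) <= D + c.
Proof.
  intros Hct HD Hht Hst.
  destruct Hd as [_ [_ [Hsym Htri]]].
  assert (Up1 : d (g1 h) (g1 t) <= d (g1 h) (g2 s) + d (g2 s) (g2 t) + d (g2 t) (g1 t)).
  { pose proof (Htri (g1 h) (g2 s) (g1 t)); pose proof (Htri (g2 s) (g2 t) (g1 t)); lra. }
  assert (Up2 : d (g2 s) (g2 t) <= d (g2 s) (g1 h) + d (g1 h) (g1 t) + d (g1 t) (g2 t)).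
  { pose proof (Htri (g2 s) (g1 h) (g2 t)); pose proof (Htri (g1 h) (g1 t) (g2 t)); lra. }
  rewrite G1, G2 in Up1, Up2.
  rewrite (Hsym (g2 t) (g1 t)) in Up1.
  rewrite (Hsym (g2 s) (g1 h)) in Up2.
  rewrite (Rabs_left1 (h - t)), (Rabs_left1 (s - t)) in Up1, Up2 by lra.
  apply Rabs_le; lra.
Qed.

Lemma geodesic_horizontal_bound (c D h : R) :
  eventually_close d g1 g2 c -> dist_img_le d (g1 h) g2 D ->
  d (g1 h) (g2 h) <= 2 * D + c.
Proof.
  intros Hclose Himg.
  apply Rle_plus_epsilon; intros e He.
  destruct (Himg (e / 2)) as [s Hs]; [lra|].
  destruct (Hclose (Rmax h s)) as [t [Ht Hct]].
  pose proof (Rmax_l h s); pose proof (Rmax_r h s).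
  pose proof (geodesic_gap c (D + e / 2) h s t Hct ltac:(lra) ltac:(lra) ltac:(lra)) as Hgap.
  destruct Hd as [_ [_ [_ Htri]]].
  pose proof (Htri (g1 h) (g2 s) (g2 h)) as Hvia.
  rewrite G2 in Hvia.
  lra.
Qed.

End TwoGeodesics.

Lemma exp_decay_eventually (E eps a : R) :
  0 < eps -> 0 <= E -> exists t, a <= t /\ exp (- t) * E < eps.
Proof.
  intros Heps HE.
  set (t := Rmax a (E / eps) + 1).
  exists t.
  pose proof (Rmax_l a (E / eps)); pose proof (Rmax_r a (E / eps)).
  split; [unfold t; lra|].
  assert (Hexp : 1 + t <= exp t) by apply exp_ineq1_le.
  assert (Hpos : 0 < exp t) by apply exp_pos.
  assert (HE_lt : E < eps * exp t).
  { replace E with (eps * (E / eps)) by (field; lra).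
    apply Rmult_lt_compat_l; unfold t in *; lra. }
  rewrite exp_Ropp.
  apply (Rmult_lt_reg_r (exp t)); [exact Hpos|].
  replace (/ exp t * E * exp t) with E by (field; lra).
  lra.
Qed.

(** Hypothesis (3) makes the images of any two vertical geodesics
    eventually R-close: the Euclidean distance |x - x'| is fixed. *)
Lemma vertical_images_eventually_close {m : nat} {X : Type} (d : X -> X -> R)
  (eps Rc : R) (F : Vec m -> R -> X) (x x' : Vec m) :
  0 < eps ->
  (forall x x' t, exp (- t) * euclid x x' < eps -> d (F x t) (F x' t) <= Rc) ->
  eventually_close d (F x) (F x') Rc.
Proof.
  intros Heps H3 a.
  assert (HE : 0 <= euclid x x') by (unfold euclid; apply sqrt_pos).
  destruct (exp_decay_eventually (euclid x x') eps a Heps HE) as [t [Ht Hsmall]].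
  exists t; split; [exact Ht | exact (H3 _ _ _ Hsmall)].
Qed.

Lemma Rc_le_DeltaC (delta eps Rc : R) :
  0 < eps -> 0 <= Rc -> Rc <= DeltaC delta eps Rc.
Proof.
  intros Heps HRc.
  unfold DeltaC. eapply Rle_trans; [|apply Rmax_r].
  assert (0 <= 2 * Rc / eps).
  { unfold Rdiv. apply Rmult_le_pos; [lra|]. left; apply Rinv_0_lt_compat; lra. }
  lra.
Qed.

Lemma eventually_close_sym {X : Type} (d : X -> X -> R) (g1 g2 : R -> X) (c : R) :
  is_metric d -> eventually_close d g1 g2 c -> eventually_close d g2 g1 c.
Proof.
  intros [_ [_ [Hsym _]]] Hclose a.
  destruct (Hclose a) as [t Ht]; exists t; rewrite Hsym; exact Ht.
Qed.

Theorem claim2p3 (n : nat) (X : Type) (d : X -> X -> R) (delta eps Rc : R)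
  (F : Vec (n - 1) -> R -> X)
  (Hd : is_metric d)
  (Heps : 0 < eps)
  (H1 : forall x, geodesic d (F x))
  (H2 : forall x x', x <> x' ->
          exists g3, ideal_slim_triangle d delta (F x) (F x') g3)
  (H3 : forall x x' t, exp (- t) * euclid x x' < eps -> d (F x t) (F x' t) <= Rc)
  (H4 : forall (xk xk' : nat -> Vec (n - 1)) (tk : nat -> R),
          cv_infty (fun k => exp (- tk k) * euclid (xk k) (xk' k)) ->
          cv_infty (fun k => d (F (xk k) (tk k)) (F (xk' k) (tk k))))
  (x x' : Vec (n - 1)) (Hxx' : x <> x')
  (hT : R)
  (HhT : is_min (height_set d F (DeltaC delta eps Rc) x x') hT) :
  d (F x hT) (F x' hT) <= 3 * DeltaC delta eps Rc.
Proof.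
  set (De := DeltaC delta eps Rc).
  pose proof (vertical_images_eventually_close d eps Rc F x x' Heps H3) as Hclose.
  assert (HRc : 0 <= Rc).
  { destruct (Hclose 0) as [t [_ Ht]].
    destruct Hd as [Hpos _]; pose proof (Hpos (F x t) (F x' t)); lra. }
  pose proof (Rc_le_DeltaC delta eps Rc Heps HRc) as HRcDe.
  assert (Hbound : d (F x hT) (F x' hT) <= 2 * De + Rc).
  { destruct HhT as [[Himg | Himg] _].
    - exact (geodesic_horizontal_bound X d (F x) (F x') Hd (H1 x) (H1 x') Rc De hT
               Hclose Himg).
    - assert (Hsym : d (F x hT) (F x' hT) = d (F x' hT) (F x hT))
        by (destruct Hd as [_ [_ [Hsym _]]]; apply Hsym).
      rewrite Hsym.
      exact (geodesic_horizontal_bound X d (F x') (F x) Hd (H1 x') (H1 x) Rc De hT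
               (eventually_close_sym d (F x) (F x') Rc Hd Hclose) Himg). }
  unfold De in *; lra.
Qed.
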